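(* Let $k \geq \ell \geq 2$, $k \geq 3$, $n > k+\ell$. Suppose $\mathcal F \subset \binom{[n]}{k}$ and $\mathcal G \subset \binom{[2\ell]}{\ell}$ are non-trivial and cross-intersecting. Then $$|\mathcal F| + |\mathcal G| \leq h(n,k,\ell) := \binom{n}{k} - 2\binom{n-\ell}{k} + \binom{n-2\ell}{k} + 2,$$ and the inequality is strict unless $|\mathcal G| = 2$.
   Context: Families are cross-intersecting if every member of one meets every member of the other; a non-empty family is non-trivial if the intersection of all its members is empty. $\binom{[2\ell]}{\ell}$ is the set of $\ell$-subsets of $\{1,\dots,2\ell\}$. *)

From mathcomp Require Import all_boot all_order all_algebra.
Set Implicit Arguments. Unset Strict Implicit. Unset Printing Implicit Defensive.

(* Ground set [n] is modelled as 'I_n = {0,...,n-1}. *)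

Definition cross_intersecting (T : finType) (F G : {set {set T}}) : Prop :=
  forall A B, A \in F -> B \in G -> A :&: B != set0.

Definition nontrivial (T : finType) (F : {set {set T}}) : Prop :=
  F != set0 /\ \bigcap_(A in F) A = set0.

Definition k_uniform (T : finType) (k : nat) (F : {set {set T}}) : Prop :=
  forall A, A \in F -> #|A| = k.

Definition initseg (n m : nat) : {set 'I_n} := [set i : 'I_n | i < m].

From mathcomp Require Import all_boot all_order all_algebra.
From mathcomp Require Import zify ring.
Import GRing.Theory Num.Theory.
Set Implicit Arguments. Unset Strict Implicit. Unset Printing Implicit Defensive.

(* Fix B in G and a member C1 of G missing some point of B; put G' = G \ {B, C1}.
   F contains none of the "avoiders" (k-sets missing some member of G), and the
   avoiders contain three disjoint families:
   - the k-subsets of [n] \ B                                     C(n-l,k) sets;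
   - the "pads" (U \ C) + R, C in G', R a (k-l)-subset of [n] \ U   |G'| C(n-2l,k-l);
   - the "targets": the other avoiders meeting B.
   The targets are compared with the "sources", the k-subsets of [n] \ (U \ B)
   meeting B, of which there are C(n-l,k) - C(n-2l,k): an induction over the
   subsets Bp of B, adding the points of B one at a time, shows that there are at
   least as many targets as sources, and one more when k = l.  Together with
   |G| <= |G'| + 2 this gives the bound; when |G| >= 3 we have G' <> set0, and the
   bound is strict because C(n-2l,k-l) >= 2 (if l < k) or by the extra target
   (if k = l). *)

Section KSubsets.
Variable T : finType.
Implicit Types (S W Z : {set T}).

Definition ksub S k := [set A : {set T} | A \subset S & #|A| == k].
Definition ksub_with S k b := [set A in ksub S k | b \in A].

Lemma card_ksub S k : #|ksub S k| = 'C(#|S|, k).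
Proof. exact: cards_draws. Qed.

Lemma card_ksub_with S k b :
  b \in S -> #|ksub_with S k b| + 'C(#|S|.-1, k) = 'C(#|S|, k).
Proof.
move=> bS.
have -> : ksub_with S k b = ksub S k :&: [set A : {set T} | b \in A].
  by apply/setP => A; rewrite !inE.
have -> : 'C(#|S|.-1, k) = #|ksub S k :\: [set A : {set T} | b \in A]|.
  rewrite [in LHS](cardsD1 b) bS -card_ksub; apply: eq_card => A.
  rewrite !inE; apply/andP/and3P => [[sA cA] | [bA sA cA]].
    split=> //; first by apply/negP => /(subsetP sA); rewrite !inE eqxx.
    exact: subset_trans sA (subsetDl _ _).
  split=> //; apply/subsetP => x xA; rewrite !inE (subsetP sA) // andbT.
  by apply: contraNneq bA => <-.
by rewrite -card_ksub cardsID.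
Qed.

Lemma card_ksub_with_eq S S' k b : b \in S -> b \in S' -> #|S| = #|S'| ->
  #|ksub_with S k b| = #|ksub_with S' k b|.
Proof.
move=> bS bS' eSS'; apply/eqP; rewrite -(eqn_add2r 'C(#|S|.-1, k)).
by rewrite card_ksub_with // eSS' card_ksub_with.
Qed.

Lemma exists_ksub_with W b s : b \in W -> 0 < s <= #|W| ->
  exists Z, [/\ b \in Z, Z \subset W & #|Z| = s].
Proof.
move=> bW /andP[s0 sW].
have : 0 < #|ksub (W :\ b) s.-1|.
  by rewrite card_ksub bin_gt0; move: sW; rewrite (cardsD1 b W) bW; lia.
case/card_gt0P => Z0; rewrite inE => /andP[sZ0 /eqP cZ0].
have bZ0 : b \notin Z0 by apply/negP => /(subsetP sZ0); rewrite !inE eqxx.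
exists (b |: Z0); split; first by rewrite setU11.
  by rewrite subUset sub1set bW (subset_trans sZ0) // subsetDl.
by rewrite cardsU1 bZ0 cZ0; lia.
Qed.

Lemma cardsC_eq S S' : #|S| = #|S'| -> #|~: S| = #|~: S'|.
Proof. by move=> e; apply/eqP; rewrite -(eqn_add2l #|S|) cardsC e cardsC. Qed.

Lemma cardsU_disjoint S1 S2 : [disjoint S1 & S2] -> #|S1 :|: S2| = #|S1| + #|S2|.
Proof. by move=> d; rewrite cardsU (disjoint_setI0 d) cards0 subn0. Qed.

Lemma card_disjoint_sub S1 S2 S :
  S1 \subset S -> S2 \subset S -> [disjoint S1 & S2] -> #|S1| + #|S2| <= #|S|.
Proof.
by move=> s1 s2 d; rewrite -cardsU_disjoint //; apply: subset_leq_card; rewrite subUset s1 s2.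
Qed.

Lemma card_setD2 S a b : #|S| <= #|S :\: [set a; b]| + 2.
Proof.
have h1 := subset_leq_card (subsetIr S [set a; b]).
have h2 : #|[set a; b]| <= 2 by rewrite cards2; case: (a != b).
by rewrite cardsD; lia.
Qed.

End KSubsets.

Lemma bin_ge2 N r : 0 < r < N -> 2 <= 'C(N, r).
Proof.
case: N => [|N]; first by rewrite andbF.
case: r => // r /andP[_ lt]; rewrite binS.
have h1 : 0 < 'C(N, r.+1) by rewrite bin_gt0.
have h2 : 0 < 'C(N, r) by rewrite bin_gt0 ltnW.
lia.
Qed.

Section Avoiders.
Variable T : finType.
Variables (U B : {set T}) (l k : nat) (G G' : {set {set T}}).
Hypothesis cardU : #|U| = l + l.
Hypothesis subBU : B \subset U.
Hypothesis cardB : #|B| = l.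
Hypothesis subG : forall C, C \in G -> C \subset U.
Hypothesis cardG : forall C, C \in G -> #|C| = l.
Hypothesis subG' : G' \subset G.
Implicit Types (Bp Z A C R : {set T}) (b x y : T).

(* The k-sets disjoint from some member of G: a family that is cross-intersecting
   with G contains none of them. *)
Definition avoiders := [set A : {set T} | (#|A| == k) && [exists C in G, A :&: C == set0]].

(* A meets U exactly in the complement of a member of G'; these sets are
   counted separately in [avoiders_lower_bound]. *)
Definition cotrace A := [exists C in G', A :&: U == U :\: C].

Definition targets Bp := [set A in avoiders |
  [&& A :&: (B :\: Bp) == set0, A :&: Bp != set0 & ~~ cotrace A]].

Definition sources Bp := [set A in ksub (~: (U :\: Bp)) k | A :&: Bp != set0].

Lemma sources0 : sources set0 = set0.
Proof. by apply/setP => A; rewrite !inE setI0 eqxx andbF. Qed.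

Lemma sources_split Bp b Z : b \in Bp -> b \in Z -> #|Z| = #|~: (U :\: Bp)| ->
  #|sources Bp| <= #|ksub_with Z k b| + #|sources (Bp :\ b)|.
Proof.
move=> bBp bZ cZ.
have bS : b \in ~: (U :\: Bp) by rewrite !inE bBp.
rewrite (card_ksub_with_eq k bZ bS cZ); apply: leq_trans (leq_card_setU _ _).
apply: subset_leq_card; apply/subsetP => A; rewrite !inE => /andP[/andP[sA cA] mA].
rewrite sA cA /=; case bA: (b \in A) => //=; rewrite andbT; apply/andP; split.
  apply/subsetP => x xA; move/subsetP: sA => /(_ x xA); rewrite !inE.
  by have -> : x != b by apply: contraTneq xA => ->; rewrite bA.
case/set0Pn: mA => x; rewrite !inE => /andP[xA xB]; apply/set0Pn; exists x.
by rewrite !inE xA xB andbT; apply: contraTneq xA => ->; rewrite bA.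
Qed.

Lemma targets_shrink Bp b : targets (Bp :\ b) \subset targets Bp.
Proof.
apply/subsetP => A; rewrite !inE => /andP[-> /and3P[/eqP dA mA ->]].
rewrite /= andbT; apply/andP; split.
  apply/eqP/setP => x; rewrite !inE; apply/negP => /and3P[xA xBp xB].
  by move/setP: dA => /(_ x); rewrite !inE xA xB (negbTE xBp) andbF.
by case/set0Pn: mA => x; rewrite !inE => /and3P[xA _ xBp]; apply/set0Pn; exists x; rewrite !inE xA.
Qed.

Lemma targets_fresh_disjoint Z Bp b : b \in B ->
  [disjoint ksub_with Z k b & targets (Bp :\ b)].
Proof.
move=> bB; rewrite -setI_eq0; apply/eqP/setP => A; rewrite !inE.
apply/negP => /andP[/andP[_ bA] /andP[_ /andP[/eqP/setP/(_ b) + _]]].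
by rewrite !inE bA bB eqxx.
Qed.

(* A k-set containing U \ C and missing C' forces C = C' (both have l points in U). *)
Lemma cotrace_member_eq C C' A : C \in G -> C' \in G ->
  U :\: C \subset A -> A :&: C' == set0 -> C = C'.
Proof.
move=> CG C'G sUA /eqP dA.
suff sC'C : C' \subset C by apply/eqP; rewrite eq_sym eqEcard sC'C (cardG CG) (cardG C'G) leqnn.
apply/subsetP => x xC'; apply/negPn/negP => xC.
have xA : x \in A by apply: (subsetP sUA); rewrite !inE xC (subsetP (subG C'G)).
by move/setP: dA => /(_ x); rewrite !inE xA xC'.
Qed.

Lemma ksub_with_targets Bp b C Z : b \in Bp -> C \in G -> b \notin C ->
  Z \subset ~: (C :|: (B :\: Bp)) -> (C \notin G') || ~~ (U :\: C \subset Z) ->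
  ksub_with Z k b \subset targets Bp.
Proof.
move=> bBp CG bC sZ hC; apply/subsetP => A; rewrite !inE => /andP[/andP[sA cA] bA].
have sAW := subset_trans sA sZ.
have dAC : A :&: C == set0.
  apply/eqP/setP => x; rewrite !inE; apply/negP => /andP[xA xC].
  by move/subsetP: sAW => /(_ x xA); rewrite !inE xC.
rewrite cA /=; apply/and4P; split.
- by apply/existsP; exists C; rewrite CG.
- apply/eqP/setP => x; rewrite !inE; apply/negP => /and3P[xA xBp xB].
  by move/subsetP: sAW => /(_ x xA); rewrite !inE xBp xB orbT.
- by apply/set0Pn; exists b; rewrite inE bA.
apply/negP => /existsP[C' /andP[C'G' /eqP eA]].
have eC : C' = C.
  by apply: (cotrace_member_eq (subsetP subG' _ C'G') CG _ dAC); rewrite -eA subsetIl.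
move: hC; rewrite -eC C'G' /= => /negP; apply.
by apply: subset_trans sA; rewrite -eA subsetIl.
Qed.

Lemma targets_grow Bp b C Z : b \in Bp -> b \in B -> C \in G -> b \notin C ->
  Z \subset ~: (C :|: (B :\: Bp)) -> (C \notin G') || ~~ (U :\: C \subset Z) ->
  #|ksub_with Z k b| + #|targets (Bp :\ b)| = #|ksub_with Z k b :|: targets (Bp :\ b)|
  /\ ksub_with Z k b :|: targets (Bp :\ b) \subset targets Bp.
Proof.
move=> bBp bB CG bC sZ hC; split; first by rewrite cardsU_disjoint ?targets_fresh_disjoint.
by rewrite subUset (ksub_with_targets bBp CG bC sZ hC) targets_shrink.
Qed.

Lemma card_targets_grow Bp b C Z : b \in Bp -> b \in B -> C \in G -> b \notin C ->
  Z \subset ~: (C :|: (B :\: Bp)) -> (C \notin G') || ~~ (U :\: C \subset Z) ->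
  #|ksub_with Z k b| + #|targets (Bp :\ b)| <= #|targets Bp|.
Proof.
move=> bBp bB CG bC sZ hC; have [-> sub] := targets_grow bBp bB CG bC sZ hC.
exact: subset_leq_card.
Qed.

Lemma card_targets_grow_strict Bp b C Z A : b \in Bp -> b \in B -> C \in G ->
  b \notin C -> Z \subset ~: (C :|: (B :\: Bp)) ->
  (C \notin G') || ~~ (U :\: C \subset Z) ->
  A \in targets Bp -> b \in A -> ~~ (A \subset Z) ->
  #|ksub_with Z k b| + #|targets (Bp :\ b)| < #|targets Bp|.
Proof.
move=> bBp bB CG bC sZ hC AT bA nAZ; have [-> sub] := targets_grow bBp bB CG bC sZ hC.
apply: proper_card; apply/properP; split=> //; exists A => //.
rewrite !inE bA (negbTE nAZ) /=; apply/negP => /andP[_ /andP[/eqP/setP/(_ b) + _]].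
by rewrite !inE bA bB eqxx.
Qed.

Lemma card_sources : #|sources B| + 'C(#|~: U|, k) = 'C(#|~: (U :\: B)|, k).
Proof.
rewrite -!card_ksub; set D := [set A : {set T} | A :&: B != set0].
have -> : sources B = ksub (~: (U :\: B)) k :&: D by apply/setP => A; rewrite !inE.
suff -> : ksub (~: U) k = ksub (~: (U :\: B)) k :\: D by rewrite cardsID.
apply/setP => A; rewrite !inE negbK; apply/andP/and3P => [[sA cA] | [/eqP dA sA cA]].
  split=> //; last by apply: subset_trans sA _; rewrite setCS subsetDl.
  rewrite -subset0; apply/subsetP => x; rewrite inE => /andP[/(subsetP sA)].
  by rewrite inE => /negP xU /(subsetP subBU).
split=> //; apply/subsetP => x xA; rewrite inE; apply/negP => xU.
have xB : x \in B by move/subsetP/(_ x xA): sA; rewrite !inE xU andbT negbK.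
by have := in_set0 x; rewrite -dA !inE xA xB.
Qed.

Definition pads := [set (U :\: p.1) :|: p.2 | p in setX G' (ksub (~: U) (k - l))].

Lemma pad_trace C R : R \subset ~: U -> ((U :\: C) :|: R) :&: U = U :\: C.
Proof.
move=> sR; apply/setP => x; rewrite !inE; case xU: (x \in U); rewrite ?andbF ?andbT //.
suff -> : (x \in R) = false by rewrite orbF.
by apply: contraTF xU => /(subsetP sR); rewrite inE.
Qed.

Lemma pad_outside C R : R \subset ~: U -> ((U :\: C) :|: R) :\: U = R.
Proof.
move=> sR; apply/setP => x; rewrite !inE; case xU: (x \in U); rewrite /= ?andbF //.
by apply/esym; apply: contraTF xU => /(subsetP sR); rewrite inE.
Qed.

(* A pad determines its pair (C, R), as its trace on U and its part outside U. *)
Lemma card_pads : #|pads| = #|G'| * 'C(#|~: U|, k - l).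
Proof.
rewrite -card_ksub -cardsX card_in_imset // => -[C R] [C' R'].
rewrite !inE /= => /andP[CG' /andP[sR _]] /andP[C'G' /andP[sR' _]] e.
have sCU := subG (subsetP subG' _ CG'); have sC'U := subG (subsetP subG' _ C'G').
have eR : R = R' by rewrite -(pad_outside C sR) -(pad_outside C' sR') e.
have compl C0 : C0 \subset U -> U :\: (U :\: C0) = C0.
  by move=> sC0; rewrite setDDr setDv set0U (setIidPr sC0).
suff eC : U :\: C = U :\: C' by rewrite -(compl C sCU) eC compl // eR.
by rewrite -(pad_trace C sR) -(pad_trace C' sR') e.
Qed.

Lemma padsP A : A \in pads ->
  exists C R, [/\ C \in G', R \subset ~: U, #|R| = k - l & A = (U :\: C) :|: R].
Proof.
by case/imsetP => -[C R]; rewrite !inE /= => /andP[CG' /andP[sR /eqP cR]] ->; exists C, R.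
Qed.

(* A pad (U \ C) + R misses C and has l + (k - l) = k points. *)
Lemma pads_avoiders : l <= k -> pads \subset avoiders.
Proof.
move=> lk; apply/subsetP => _ /padsP[C [R [CG' sR cR ->]]].
have CG := subsetP subG' _ CG'; have sCU := subG CG.
have dCR : [disjoint U :\: C & R].
  rewrite -setI_eq0 -subset0; apply/subsetP => x; rewrite !inE => /andP[/andP[_ xU]].
  by move/(subsetP sR); rewrite inE xU.
rewrite inE cardsU_disjoint // cardsDS // cardU cardG // cR addnK subnKC // eqxx /=.
apply/existsP; exists C; rewrite CG -subset0; apply/subsetP => x.
rewrite !inE => /andP[+ xC]; rewrite xC /= => /(subsetP sR).
by rewrite inE (subsetP sCU).
Qed.

(* Pads contain a point of B (as C differs from B) and are cotraces, so
   they are neither k-sets missing B nor targets. *)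
Lemma pads_disjoint : B \in G -> B \notin G' ->
  [disjoint ksub (~: B) k :|: targets B & pads].
Proof.
move=> BG BG'; rewrite -setI_eq0 -subset0; apply/subsetP => A; rewrite !inE.
case/andP => + /padsP[C [R [CG' sR cR eA]]]; rewrite eA.
have CG := subsetP subG' _ CG'; have sCU := subG CG.
case/orP => [/andP[sA _] | /andP[_ /and3P[_ _ /negP nct]]]; last first.
  by case: nct; apply/existsP; exists C; rewrite CG' pad_trace // eqxx.
have [x xB xC] : exists2 x, x \in B & x \notin C.
  apply/subsetPn; apply: contra BG' => sBC.
  by have -> : B = C by apply/eqP; rewrite eqEcard sBC (cardG CG) cardB leqnn.
have : x \in (U :\: C) :|: R by rewrite !inE xC (subsetP subBU).
by move/(subsetP sA); rewrite inE xB.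
Qed.

Lemma avoiders_lower_bound : B \in G -> B \notin G' -> l <= k ->
  #|ksub (~: B) k| + #|targets B| + #|pads| <= #|avoiders|.
Proof.
move=> BG BG' lk.
have sP1 : ksub (~: B) k \subset avoiders.
  apply/subsetP => A; rewrite !inE => /andP[sA ->] /=; apply/existsP; exists B.
  rewrite BG -subset0; apply/subsetP => x; rewrite inE => /andP[/(subsetP sA)].
  by rewrite inE => /negbTE ->.
have sT : targets B \subset avoiders by apply/subsetP => A; rewrite inE => /andP[].
have d1 : [disjoint ksub (~: B) k & targets B].
  rewrite -setI_eq0 -subset0; apply/subsetP => A; rewrite !inE.
  case/andP => /andP[sA _] /andP[_ /and3P[_ /set0Pn[x] + _]].
  by rewrite inE => /andP[/(subsetP sA)]; rewrite inE => /negbTE ->.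
rewrite -cardsU_disjoint //; apply: card_disjoint_sub; last exact: pads_disjoint.
  by rewrite subUset sP1 sT.
exact: pads_avoiders.
Qed.

Hypothesis l_ge2 : 2 <= l.

(* Room for the inductive step: outside C and B \ Bp there are |~: (U \ Bp)| points
   through b leaving out some point y of U \ C. *)
Lemma window Bp b C : Bp \proper B -> b \in Bp -> C \in G -> b \notin C ->
  exists Z, [/\ b \in Z, Z \subset ~: (C :|: (B :\: Bp)),
              #|Z| = #|~: (U :\: Bp)| & ~~ (U :\: C \subset Z)].
Proof.
move=> pBp bBp CG bC; set W := ~: (C :|: (B :\: Bp)); set s := #|~: (U :\: Bp)|.
have sBp := proper_sub pBp; have ltBp : #|Bp| < l by rewrite -cardB proper_card.
have cs : s + (l + l - #|Bp|) = #|T|.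
  by rewrite /s -(cardsC (U :\: Bp)) addnC cardsDS ?cardU // (subset_trans sBp).
suff [y [yUC yb sWy]] : exists y, [/\ y \in U :\: C, y != b & s <= #|W :\ y|].
  have bWy : b \in W :\ y by rewrite !inE eq_sym yb (negbTE bC) bBp.
  have [|Z [bZ sZ cZ]] := exists_ksub_with bWy (s := s).
    by rewrite sWy andbT /s card_gt0; apply/set0Pn; exists b; rewrite !inE bBp.
  exists Z; split=> //; first exact: subset_trans sZ (subsetDl _ _).
  by apply/negP => /subsetP/(_ y yUC)/(subsetP sZ); rewrite !inE eqxx.
case: (boolP (B :\: Bp \subset C)) => sBC.
- have cUC : 1 < #|U :\: C| by rewrite cardsDS ?subG // cardU cardG // addnK.
  have [y yUC yb] : exists2 y, y \in U :\: C & y != b.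
    have [x [y [xUC yUC xy]]] := card_gt1P cUC.
    by case: (eqVneq y b) => [eyb | ?]; [exists x; rewrite -?eyb | exists y].
  exists y; split=> //.
  have eW : W = ~: C by rewrite /W (setUidPl sBC).
  have yW : y \in W by rewrite eW inE; case/setDP: yUC.
  have cW := cardsC C; rewrite cardG // -eW (cardsD1 y W) yW in cW.
  move: cs cW ltBp; clear; lia.
- case/subsetPn: sBC => y yB yC; exists y; split.
  + by rewrite inE yC (subsetP subBU) //; case/setDP: yB.
  + by apply: contraTneq bBp => <-; case/setDP: yB => _ /negbTE ->.
  + have -> : W :\ y = W.
      by apply/setDidPl; rewrite disjoint_sym disjoints1 in_setC negbK in_setU yB orbT.
    have cCB : #|C :|: (B :\: Bp)| <= l + (l - #|Bp|).
      by apply: leq_trans (leq_card_setU _ _) _; rewrite cardsDS // cardG // cardB.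
    have cW := cardsC (C :|: (B :\: Bp)); rewrite -/W in cW.
    move: cs cW cCB ltBp; clear; lia.
Qed.

(* Every point of B is missed by some member of G (this is where the
   non-triviality of G enters). *)
Hypothesis missed : forall b, b \in B -> exists2 C, C \in G & b \notin C.

Lemma sources_le_targets_proper Bp : Bp \proper B -> #|sources Bp| <= #|targets Bp|.
Proof.
have [c] := ubnP #|Bp|; elim: c Bp => // c IH Bp cBp pBp.
have [-> | [b bBp]] := set_0Vmem Bp; first by rewrite sources0 cards0.
have bB := subsetP (proper_sub pBp) b bBp; have [C CG bC] := missed bB.
have [Z [bZ sZ cZ nUZ]] := window pBp bBp CG bC.
apply: leq_trans (sources_split bBp bZ cZ) _.
apply: leq_trans (card_targets_grow bBp bB CG bC sZ _); last by rewrite nUZ orbT.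
rewrite leq_add2l; apply: IH; last exact: sub_proper_trans (subsetDl _ _) pBp.
by move: cBp; rewrite (cardsD1 b Bp) bBp.
Qed.

Lemma sources_targets_top b1 C1 e : b1 \in B -> C1 \in G -> b1 \notin C1 -> C1 \notin G' ->
  #|sources (B :\ b1)| + e <= #|targets (B :\ b1)| -> #|sources B| + e <= #|targets B|.
Proof.
move=> b1B C1G b1C1 C1G' hlow.
have cZ : #|~: C1| = #|~: (U :\: B)|.
  by apply: cardsC_eq; rewrite cardsDS // cardU cardB (cardG C1G) addnK.
have b1Z : b1 \in ~: C1 by rewrite inE.
apply: leq_trans (leq_add (sources_split b1B b1Z cZ) (leqnn e)) _.
rewrite -addnA; apply: leq_trans (leq_add (leqnn _) hlow) _.
apply: (card_targets_grow b1B b1B C1G b1C1); last by rewrite C1G'.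
by rewrite setDv setU0.
Qed.

Lemma sources_le_targets b1 C1 : b1 \in B -> C1 \in G -> b1 \notin C1 -> C1 \notin G' ->
  #|sources B| <= #|targets B|.
Proof.
move=> b1B C1G b1C1 C1G'; rewrite -[#|sources B|]addn0.
apply: (sources_targets_top b1B C1G b1C1 C1G'); rewrite addn0.
by apply: sources_le_targets_proper; rewrite properD1.
Qed.

(* For k = l, shifting a point y of U \ C to a point r outside U turns the cotrace of C
   into a target: it still misses C, but meets U in only l - 1 points. *)
Lemma shifted_cotrace_target Bp C y r b : k = l -> C \in G -> B :\: Bp \subset C ->
  y \in U :\: C -> r \notin U -> b \in Bp -> b \in U :\: C -> b != y ->
  (U :\: C) :\ y :|: [set r] \in targets Bp.
Proof.
move=> kl CG sBC yUC rU bBp bUC bny; set A := (U :\: C) :\ y :|: [set r].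
have rUC : r \notin (U :\: C) :\ y by rewrite !inE (negbTE rU) !andbF.
have cA : #|A| = l.
  have := cardsD1 y (U :\: C); rewrite yUC cardsDS ?subG // cardU cardG // addnK => ->.
  by rewrite /A setUC cardsU1 rUC.
have dAC : A :&: C = set0.
  apply/setP => x; rewrite !inE; apply/negP => /andP[/orP[/and3P[_ xC _] | /eqP ->] xC'].
    by rewrite xC' in xC.
  by move/(subsetP (subG CG)): xC'; rewrite (negbTE rU).
rewrite !inE cA kl eqxx /=; apply/and4P; split.
- by apply/existsP; exists C; rewrite CG dAC eqxx.
- by rewrite -subset0 -dAC setIS.
- by apply/set0Pn; exists b; rewrite in_setI in_setU in_setD1 bny bUC bBp.
apply/negP => /existsP[C'' /andP[C''G' /eqP eA]].
have C''G := subsetP subG' _ C''G'.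
have : #|A :&: U| < #|A|.
  apply: proper_card; rewrite properEneq subsetIl andbT.
  have rA : r \in A by rewrite !inE eqxx orbT.
  by apply: contraTneq rA => <-; rewrite inE (negbTE rU) andbF.
by rewrite eA cardsDS ?subG // cardU cardG // cA addnK ltnn.
Qed.

Lemma sources_lt_targets b1 b2 C' r : k = l -> 3 <= l -> b1 \in B -> b2 \in B ->
  C' \in G -> b1 \in C' -> b2 \notin C' -> r \notin U ->
  #|sources (B :\ b1)| < #|targets (B :\ b1)|.
Proof.
move=> kl l3 b1B b2B C'G b1C' b2C' rU; set Bp := B :\ b1.
have b2Bp : b2 \in Bp by rewrite !inE b2B andbT; apply: contraNneq b2C' => ->.
have b2UC : b2 \in U :\: C' by rewrite inE b2C' (subsetP subBU).
have cUC : #|U :\: C'| = l by rewrite cardsDS ?subG // cardU cardG // addnK.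
have [z [y [zUC yUC zy]]] :
    exists z y, [/\ z \in (U :\: C') :\ b2, y \in (U :\: C') :\ b2 & z != y].
  by apply/card_gt1P; move: (cardsD1 b2 (U :\: C')) l3; rewrite b2UC cUC; clear; lia.
move: zUC yUC; rewrite !in_setD1 => /andP[zb2 zUC] /andP[yb2 yUC].
set Z := ~: C' :\ z.
have sBC : B :\: Bp \subset C'.
  by apply/subsetP => x; rewrite !inE negb_and negbK => /andP[/orP[/eqP -> | /negP] //].
have sZ : Z \subset ~: (C' :|: (B :\: Bp)) by rewrite (setUidPl sBC) subsetDl.
have b2Z : b2 \in Z by rewrite !inE b2C' eq_sym zb2.
have cZ : #|Z| = #|~: (U :\: Bp)|.
  have sBpU : Bp \subset U := subset_trans (subsetDl _ _) subBU.
  move: (cardsC C') (cardsC (U :\: Bp)) (cardsD1 z (~: C')) (cardsD1 b1 B).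
  rewrite cardsDS // cardU cardB (cardG C'G) b1B inE; case/setDP: zUC => _ ->.
  by rewrite -/Z -/Bp /=; move: #|~: C'| #|Z| #|Bp| #|~: (U :\: Bp)| #|T|; clear; lia.
have nUZ : ~~ (U :\: C' \subset Z) by apply/negP => /(subsetP)/(_ z zUC); rewrite !inE eqxx.
have b2y : b2 != y by rewrite eq_sym.
have AT := shifted_cotrace_target kl C'G sBC yUC rU b2Bp b2UC b2y.
apply: leq_ltn_trans (sources_split b2Bp b2Z cZ) _.
apply: leq_ltn_trans (leq_add (leqnn _) (sources_le_targets_proper _)) _.
  by apply: sub_proper_trans (subsetDl _ _) _; rewrite properD1.
apply: (card_targets_grow_strict b2Bp b2B C'G b2C' sZ _ AT); rewrite ?nUZ ?orbT //.
- by rewrite in_setU in_setD1 b2y b2UC.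
- have zA : z \in (U :\: C') :\ y :|: [set r] by rewrite in_setU in_setD1 zy zUC.
  by apply/negP => /subsetP/(_ z zA); rewrite !inE eqxx.
Qed.

End Avoiders.

Section CrossIntersecting.
Variables (T : finType) (U : {set T}) (k l : nat) (F G : {set {set T}}).
Hypothesis l_ge2 : 2 <= l.
Hypothesis l_le_k : l <= k.
Hypothesis kl_lt_T : k + l < #|T|.
Hypothesis cardU : #|U| = l + l.
Hypothesis unifF : k_uniform k F.
Hypothesis unifG : k_uniform l G.
Hypothesis subG : forall C, C \in G -> C \subset U.
Hypothesis ntG : nontrivial G.
Hypothesis crossFG : cross_intersecting F G.
Implicit Types (B C : {set T}).

Local Notation n := #|T|.

Lemma F_avoiders : #|F| + #|avoiders k G| <= 'C(n, k).
Proof.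
rewrite -cardsT -card_ksub; apply: card_disjoint_sub.
- by apply/subsetP => A AF; rewrite !inE subsetT unifF ?eqxx.
- by apply/subsetP => A; rewrite !inE subsetT => /andP[].
- rewrite -setI_eq0 -subset0; apply/subsetP => A; rewrite !inE.
  case/andP => AF /andP[_ /existsP[C /andP[CG /eqP e]]].
  by move: (crossFG AF CG); rewrite e eqxx.
Qed.

Lemma missed_point b : exists2 C, C \in G & b \notin C.
Proof.
have [_ capG] := ntG.
case: (boolP [exists C in G, b \notin C]) => [/exists_inP[C CG bC] | /exists_inPn allb].
  by exists C.
have : b \in \bigcap_(C in G) C by apply/bigcapP => C /allb; rewrite negbK.
by rewrite capG inE.
Qed.

(* A single member would be the common intersection, so G has at least two members,
   and at least three unless it has exactly two. *)
Lemma card_G_ge3 : #|G| != 2 -> 2 < #|G|.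
Proof.
move=> nG2; have [G0 capG] := ntG; rewrite -card_gt0 in G0.
have nG1 : #|G| != 1.
  apply/negP => /cards1P[B eG]; move: capG; rewrite eG big_set1 => B0.
  have BG : B \in G by rewrite eG set11.
  by move: l_ge2; rewrite -(unifG BG) B0 cards0.
by move: #|G| G0 nG1 nG2 => [|[|[|m]]].
Qed.

Lemma count_with_excess B C1 e : B \in G ->
  #|sources U k B| + e <= #|targets U B k G (G :\: [set B; C1]) B| ->
  #|F| + 2 * 'C(n - l, k) + e + #|G :\: [set B; C1]| * 'C(n - 2 * l, k - l)
    <= 'C(n, k) + 'C(n - 2 * l, k).
Proof.
set G' := G :\: [set B; C1]; move=> BG hexc.
have subG' : G' \subset G by apply: subsetDl.
have BG' : B \notin G' by rewrite !inE eqxx.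
have cardB := unifG BG; have subBU := subG BG.
have hNT := avoiders_lower_bound cardU subBU cardB subG unifG subG' BG BG' l_le_k.
have hQ := card_sources k subBU; have hF := F_avoiders.
have cCB : #|~: B| = n - l by rewrite -(cardsC B) cardB addKn.
have cCUB : #|~: (U :\: B)| = n - l.
  by rewrite -cCB; apply: cardsC_eq; rewrite cardsDS // cardU cardB addnK.
have cCU : #|~: U| = n - 2 * l by rewrite -(cardsC U) cardU addnn -mul2n addKn.
rewrite (card_pads _ _ subG subG') card_ksub cCB cCU in hNT; rewrite cCUB cCU in hQ.
move: (#|G'| * _) hNT => gw hNT; clear -hNT hQ hF hexc; lia.
Qed.

Lemma excess_zero B : B \in G ->
  exists C1, #|sources U k B| <= #|targets U B k G (G :\: [set B; C1]) B|.
Proof.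
move=> BG; have cardB := unifG BG.
have [b1 b1B] : exists b1, b1 \in B by apply/card_gt0P; rewrite cardB ltnW.
have [C1 C1G b1C1] := missed_point b1; exists C1.
apply: (sources_le_targets k cardU (subG BG) cardB subG unifG _ l_ge2 _ b1B C1G b1C1).
- exact: subsetDl.
- by move=> b _; apply: missed_point.
- by rewrite !inE eqxx orbT.
Qed.

(* When k = l and G has a third member C' (besides B and U \ B), C' meets B without
   containing it, and the targets strictly exceed the sources. *)
Lemma excess_equal B : k = l -> 3 <= k -> 2 < #|G| -> B \in G ->
  exists C1, #|sources U k B| + 1 <= #|targets U B k G (G :\: [set B; C1]) B|.
Proof.
move=> kl k3 G3 BG; have cardB := unifG BG; have subBU := subG BG.
have [C' C'G'] : exists C', C' \in G :\: [set B; U :\: B].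
  have : #|G| <= #|G :\: [set B; U :\: B]| + 2 := card_setD2 G B (U :\: B).
  move=> hG; have : 0 < #|G :\: [set B; U :\: B]|.
    by rewrite -(ltn_add2r 2); apply: leq_trans G3 hG.
  by case/card_gt0P => C' ?; exists C'.
move: C'G'; rewrite !inE negb_or => /andP[/andP[C'B C'UB] C'G].
have cC' := unifG C'G; have sC'U := subG C'G.
have [b1 b1C'B] : exists b1, b1 \in C' :&: B.
  apply/set0Pn; apply: contra C'UB => /eqP dC'B.
  rewrite eqEcard cC' cardsDS // cardU cardB addnK leqnn andbT.
  apply/subsetP => x xC'; rewrite inE (subsetP sC'U) // andbT.
  by apply/negP => xB; have := in_set0 x; rewrite -dC'B inE xC' xB.
have [b1C' b1B] := setIP b1C'B.
have [b2 b2B b2C'] : exists2 b2, b2 \in B & b2 \notin C'.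
  apply/subsetPn; apply: contra C'B => sBC'.
  by rewrite eq_sym eqEcard sBC' cC' cardB leqnn.
have [r rU] : exists r, r \in ~: U.
  apply/card_gt0P; rewrite -(ltn_add2l #|U|) cardsC addn0 cardU.
  by apply: leq_ltn_trans kl_lt_T; rewrite leq_add2r.
have [C1 C1G b1C1] := missed_point b1; exists C1.
have subG' : G :\: [set B; C1] \subset G by apply: subsetDl.
apply: (sources_targets_top cardU subBU cardB subG unifG subG' b1B C1G b1C1).
  by rewrite !inE eqxx orbT.
rewrite addn1; apply: (sources_lt_targets cardU subBU cardB subG unifG subG' l_ge2
  (fun b _ => missed_point b) (r := r) kl _ b1B b2B C'G b1C' b2C'); first by rewrite -kl.
by rewrite inE in rU.
Qed.

Lemma cross_bound : #|F| + #|G| + 2 * 'C(n - l, k) <= 'C(n, k) + 'C(n - 2 * l, k) + 2.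
Proof.
have [B BG] : exists B, B \in G by apply/set0Pn; case: ntG.
have [C1 hexc] := excess_zero BG; rewrite -[#|sources _ _ _|]addn0 in hexc.
have hcount := count_with_excess BG hexc.
have hG : #|G| <= #|G :\: [set B; C1]| + 2 := card_setD2 G B C1.
have w0 : 0 < 'C(n - 2 * l, k - l) by rewrite bin_gt0; move: kl_lt_T; clear; lia.
move: #|G :\: _| 'C(n - 2 * l, k - l) hcount hG w0 => g w hcount hG w0.
have := leq_pmulr g w0; move: (g * w) hcount => gw hcount; clear -hcount hG; lia.
Qed.

Lemma cross_bound_strict : 3 <= k -> #|G| != 2 ->
  #|F| + #|G| + 2 * 'C(n - l, k) < 'C(n, k) + 'C(n - 2 * l, k) + 2.
Proof.
move=> k3 nG2; have G3 := card_G_ge3 nG2.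
have [B BG] : exists B, B \in G by apply/set0Pn; case: ntG.
have [lk | kl] := ltnP l k.
- (* l < k: each member of G \ {B, C1} pads at least two avoiders *)
  have [C1 hexc] := excess_zero BG; rewrite -[#|sources _ _ _|]addn0 in hexc.
  have hcount := count_with_excess BG hexc.
  have hG : #|G| <= #|G :\: [set B; C1]| + 2 := card_setD2 G B C1.
  have w2 : 2 <= 'C(n - 2 * l, k - l) by apply: bin_ge2; move: lk kl_lt_T; clear; lia.
  move: #|G :\: _| 'C(n - 2 * l, k - l) hcount hG w2 => g w hcount hG w2.
  have := leq_mul (leqnn g) w2; move: (g * w) hcount => gw hcount.
  by clear -hcount hG G3; lia.
- (* k = l: the targets exceed the sources *)
  have ekl : k = l by apply/eqP; rewrite eqn_leq kl l_le_k.
  have [C1 hexc] := excess_equal ekl k3 G3 BG.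
  have hcount := count_with_excess BG hexc.
  have hG : #|G| <= #|G :\: [set B; C1]| + 2 := card_setD2 G B C1.
  have w0 : 0 < 'C(n - 2 * l, k - l) by rewrite ekl subnn bin0.
  move: #|G :\: _| 'C(n - 2 * l, k - l) hcount hG w0 => g w hcount hG w0.
  by have := leq_pmulr g w0; move: (g * w) hcount => gw hcount; clear -hcount hG; lia.
Qed.

End CrossIntersecting.

Unset Implicit Arguments.
Local Open Scope ring_scope.

Lemma card_initseg n m : (m <= n)%N -> #|initseg n m| = m.
Proof.
move=> mn; have inj : injective (widen_ord mn) by move=> a b /(congr1 val) /= /val_inj.
rewrite -[RHS]card_ord -(card_imset _ inj).
apply: eq_card => i; rewrite inE; apply/idP/imsetP => [im | [j _ ->]]; last exact: (ltn_ord j).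
by exists (Ordinal im) => //; apply: val_inj.
Qed.

Theorem proposition4p3 (n k l : nat) (F G : {set {set 'I_n}}) :
  (2 <= l)%N -> (l <= k)%N -> (3 <= k)%N -> (k + l < n)%N ->
  k_uniform k F ->
  k_uniform l G -> (forall B, B \in G -> B \subset initseg n (2 * l)) ->
  nontrivial F -> nontrivial G -> cross_intersecting F G ->
  ((#|F| + #|G|)%:Z <=
     ('C(n, k))%:Z - 2 * ('C(n - l, k))%:Z + ('C(n - 2 * l, k))%:Z + 2)
  /\ ((#|G| != 2)%N ->
     (#|F| + #|G|)%:Z <
     ('C(n, k))%:Z - 2 * ('C(n - l, k))%:Z + ('C(n - 2 * l, k))%:Z + 2).
Proof.
move=> l2 lk k3 kln unifF unifG subG _ ntG crossFG.
have cardU : #|initseg n (2 * l)| = (l + l)%N.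
  by rewrite card_initseg mul2n -addnn //; move: kln lk; clear; lia.
have knT : (k + l < #|'I_n|)%N by rewrite card_ord.
have := cross_bound l2 lk knT cardU unifF unifG subG ntG crossFG.
have := cross_bound_strict l2 lk knT cardU unifF unifG subG ntG crossFG k3.
rewrite card_ord => hstrict hbound.
have -> : ('C(n, k))%:Z - 2 * ('C(n - l, k))%:Z + ('C(n - 2 * l, k))%:Z + 2 =
    ('C(n, k) + 'C(n - 2 * l, k) + 2)%N%:Z - (2 * 'C(n - l, k))%N%:Z.
  by rewrite !PoszD; ring.
split; first by rewrite lerBrDr -!PoszD lez_nat.
by move=> /hstrict; rewrite ltrBrDr -!PoszD ltz_nat.
Qed.
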